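(* Let $4\le\beta\le n-2$ and let $\gamma_1,\gamma_2,\gamma_3$ be positive integers with $\gamma_1+\gamma_2+\gamma_3<n$ such that $\min(\gamma_1,\gamma_2)\ge 2$, or $\min(\gamma_1,\gamma_3)\ge 2$, or $\min(\gamma_2,\gamma_3)\ge 2$. Then $\mathcal T_{(n),(\beta),(\gamma_1,\gamma_2,\gamma_3)}$ has infinitely many $G$-orbits.
   Context: $\mathbb F$ is an infinite field of characteristic $\ne 2$. Equip $\mathbb F^{2n}$ (canonical basis $e_1,\ldots,e_{2n}$) with the symmetric bilinear form $(e_i,e_j)=\delta_{i,2n+1-j}$, and let $G={\rm O}_{2n}(\mathbb F)$ be its isometry group. A subspace $V$ is isotropic if $(V,V)=\{0\}$. For a sequence ${\bf a}=(\alpha_1,\ldots,\alpha_p)$ of positive integers with $\sum\alpha_j\le n$, $M_{\bf a}$ is the set of flags $V_1\subset\cdots\subset V_p$ in $\mathbb F^{2n}$ with $\dim V_j=\alpha_1+\cdots+\alpha_j$ and $V_p$ isotropic. $\mathcal T_{{\bf a},{\bf b},{\bf c}}=M_{\bf a}\times M_{\bf b}\times M_{\bf c}$ with the diagonal $G$-action. *)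

From HB Require Import structures.
From mathcomp Require Import all_boot all_order all_algebra.
Set Implicit Arguments. Unset Strict Implicit. Unset Printing Implicit Defensive.
Import GRing.Theory.
Local Open Scope ring_scope.

(* Ambient space F^(2n) as row vectors 'rV[F]_(n.*2); basis e_1..e_2n is
   delta rows 0..2n-1 (0-based). *)
Definition Vsp (F : fieldType) (n : nat) := {vspace 'rV[F]_(n.*2)}.

(* Gram matrix: (e_i, e_j) = delta_{i, 2n+1-j} (1-based) i.e. i0 + j0 + 1 = 2n *)
Definition gramJ (F : fieldType) (n : nat) : 'M[F]_(n.*2) :=
  \matrix_(i, j) ((i + j).+1 == n.*2)%:R.

Definition form (F : fieldType) (n : nat) (u v : 'rV[F]_(n.*2)) : F :=
  (u *m gramJ F n *m v^T) 0 0.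

Definition isotropic (F : fieldType) (n : nat) (V : Vsp F n) : Prop :=
  forall u v, u \in V -> v \in V -> form u v = 0.

(* G = O_2n(F): invertible g (acting by v |-> v *m g) preserving the form *)
Definition orthogonal_mx (F : fieldType) (n : nat) (g : 'M[F]_(n.*2)) : Prop :=
  g \in unitmx /\ g *m gramJ F n *m g^T = gramJ F n.

Definition act_vs (F : fieldType) (n : nat) (g : 'M[F]_(n.*2)) (V : Vsp F n)
  : Vsp F n := (linfun (mulmxr g) @: V)%VS.

Definition in_M (F : fieldType) (n : nat) (a : seq nat) (fl : seq (Vsp F n))
  : Prop :=
  size fl = size a /\
  (forall j, (j < size a)%N -> \dim (nth 0%VS fl j) = \sum_(i < j.+1) nth 0%N a i) /\
  (forall j, (j.+1 < size a)%N -> (nth 0%VS fl j <= nth 0%VS fl j.+1)%VS) /\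
  isotropic (last 0%VS fl).

Definition triple (F : fieldType) (n : nat) :=
  (seq (Vsp F n) * seq (Vsp F n) * seq (Vsp F n))%type.

Definition in_T (F : fieldType) (n : nat) (a b c : seq nat) (t : triple F n)
  : Prop := in_M a t.1.1 /\ in_M b t.1.2 /\ in_M c t.2.

Definition act_triple (F : fieldType) (n : nat) (g : 'M[F]_(n.*2))
  (t : triple F n) : triple F n :=
  (map (act_vs g) t.1.1, map (act_vs g) t.1.2, map (act_vs g) t.2).

Definition same_orbit (F : fieldType) (n : nat) (t t' : triple F n) : Prop :=
  exists g, orthogonal_mx g /\ act_triple g t = t'.

Definition infinitely_many_orbits (F : fieldType) (n : nat) (a b c : seq nat)
  : Prop :=
  ~ exists s : seq (triple F n),
      forall t, in_T a b c t -> exists2 t', t' \in s & same_orbit t t'.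

From Pilot Require Import Defs.
From HB Require Import structures.
From mathcomp Require Import all_boot all_order all_algebra.
From mathcomp Require Import zify ring.
From Stdlib Require Import Classical.
Set Implicit Arguments. Unset Strict Implicit. Unset Printing Implicit Defensive.
Import GRing.Theory.
Local Open Scope ring_scope.

(* In a hyperbolic basis e_1, ..., e_n, f_1, ..., f_n ((e_i, f_j) = delta_ij, all other
   products 0) we build a one-parameter family x |-> T(x) of points of the variety: the
   Lagrangian V = <e_1, ..., e_n>, an isotropic W = <f_1, ..., f_4, e_7, ...> and an
   isotropic flag U_1 < U_2(x) < U_3 = <u_1, ..., u_5, e_7, ...> in which only U_2 depends
   on x, through the vector u_1 + x u_3. The vectors e_7, e_8, ... are orthogonal to
   everything else and only adjust the dimensions.
   If an isometry g maps T(x) to T(y), then A = f_2 g and B = f_4 g lie in subspaces of W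
   defined from the triple alone, such as W /\ (V + (W + U_3)^perp) or W /\ (V + U_2(y)).
   This gives linear relations between the coordinates (A, e_i), (B, e_i), from which
   (y - x) (A, e_2) = 0 when 2 != 0. Finally (A, e_2) != 0, since otherwise A would be
   orthogonal to V, whereas (f_2 g, e_2 g) = (f_2, e_2) = 1. Hence each orbit meets the
   family at most once, and infinitely many orbits are needed to cover it. *)

Section Form.
Variables (F : fieldType) (n : nat).
Local Notation vec := 'rV[F]_(n.*2).
Local Notation mx := 'M[F]_(n.*2).
Local Notation form := (@Defs.form F n).
Local Notation J := (gramJ F n).

Lemma formDl (u1 u2 v : vec) : form (u1 + u2) v = form u1 v + form u2 v.
Proof. by rewrite /Defs.form !mulmxDl mxE. Qed.

Lemma formZl a (u v : vec) : form (a *: u) v = a * form u v.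
Proof. by rewrite /Defs.form -!scalemxAl mxE. Qed.

Lemma formNl (u v : vec) : form (- u) v = - form u v.
Proof. by rewrite -scaleN1r formZl mulN1r. Qed.

Lemma formBl (u1 u2 v : vec) : form (u1 - u2) v = form u1 v - form u2 v.
Proof. by rewrite formDl formNl. Qed.

Lemma form0l (v : vec) : form 0 v = 0.
Proof. by rewrite -(scale0r (0 : vec)) formZl mul0r. Qed.

Lemma tr_gramJ : J^T = J.
Proof. by apply/matrixP => i j; rewrite !mxE addnC. Qed.

Lemma formC (u v : vec) : form u v = form v u.
Proof.
rewrite /Defs.form -[u *m J *m v^T]trmxK [in LHS]mxE.
by rewrite !trmx_mul trmxK tr_gramJ mulmxA.
Qed.

Lemma formDr (u v1 v2 : vec) : form u (v1 + v2) = form u v1 + form u v2.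
Proof. by rewrite !(formC u) formDl. Qed.

Lemma formZr a (u v : vec) : form u (a *: v) = a * form u v.
Proof. by rewrite !(formC u) formZl. Qed.

Lemma formNr (u v : vec) : form u (- v) = - form u v.
Proof. by rewrite !(formC u) formNl. Qed.

Lemma formBr (u v1 v2 : vec) : form u (v1 - v2) = form u v1 - form u v2.
Proof. by rewrite !(formC u) formBl. Qed.

Lemma form0r (u : vec) : form u 0 = 0.
Proof. by rewrite formC form0l. Qed.

Lemma form_suml (I : Type) (r : seq I) (P : pred I) (u : I -> vec) v :
  form (\sum_(i <- r | P i) u i) v = \sum_(i <- r | P i) form (u i) v.
Proof. by rewrite /Defs.form !mulmx_suml summxE. Qed.

Lemma span_orthl (X : seq vec) z :
  {in X, forall x, form x z = 0} -> {in <<X>>%VS, forall u, form u z = 0}.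
Proof.
move=> Xz u uX; rewrite (coord_span (X := in_tuple X) uX) form_suml big1 // => i _.
by rewrite formZl Xz ?mulr0 // mem_nth.
Qed.

Lemma isotropic_span (X : seq vec) :
  {in X &, forall x y, form x y = 0} -> isotropic <<X>>%VS.
Proof.
move=> XX u v uX vX; rewrite formC; apply: (span_orthl _ vX) => y yX.
by rewrite formC; apply: (span_orthl _ uX) => x xX; apply: XX.
Qed.

Lemma free_cons_orth (v : vec) X z :
  {in X, forall x, form x z = 0} -> form v z != 0 -> free X -> free (v :: X).
Proof.
move=> Xz vz freeX; rewrite free_cons freeX andbT.
by apply: contra vz => /(span_orthl Xz) ->.
Qed.

Lemma orthogonal_form (g : mx) (u v : vec) :
  orthogonal_mx g -> form (u *m g) (v *m g) = form u v.
Proof. by case=> _ gJ; rewrite /Defs.form trmx_mul !mulmxA -(mulmxA u) -(mulmxA u) gJ. Qed.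

Lemma orthogonal_mxM (g h : mx) :
  orthogonal_mx g -> orthogonal_mx h -> orthogonal_mx (g *m h).
Proof.
case=> gU gJ [hU hJ]; split; first by rewrite unitmx_mul gU hU.
have -> : g *m h *m J *m (g *m h)^T = g *m (h *m J *m h^T) *m g^T.
  by rewrite trmx_mul !mulmxA.
by rewrite hJ gJ.
Qed.

Lemma orthogonal_mxV (g : mx) : orthogonal_mx g -> orthogonal_mx (invmx g).
Proof.
case=> gU gJ; split; first by rewrite unitmx_inv.
by rewrite -{1}gJ !mulmxA mulVmx // mul1mx -mulmxA -trmx_mul mulVmx // trmx1 mulmx1.
Qed.

End Form.

Section Action.
Variables (F : fieldType) (n : nat).
Local Notation mx := 'M[F]_(n.*2).
Local Notation form := (@Defs.form F n).

Lemma mem_act_vs (g : mx) (X Y : Vsp F n) u : act_vs g X = Y -> u \in X -> u *m g \in Y.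
Proof. by move=> <- uX; have := memv_img (linfun (mulmxr g)) uX; rewrite lfunE. Qed.

Lemma act_vsP (g : mx) (X : Vsp F n) w :
  w \in act_vs g X -> exists2 u, u \in X & w = u *m g.
Proof. by case/memv_imgP => u uX ->; exists u; rewrite // lfunE. Qed.

Lemma act_vs_orthl (g : mx) (X Y : Vsp F n) z :
  orthogonal_mx g -> act_vs g X = Y -> {in X, forall t, form t z = 0} ->
  {in Y, forall t, form t (z *m g) = 0}.
Proof. by move=> og <- Xz t /act_vsP [u uX ->]; rewrite orthogonal_form // Xz. Qed.

Lemma act_vsM (g h : mx) (X : Vsp F n) : act_vs (g *m h) X = act_vs h (act_vs g X).
Proof.
rewrite /act_vs -limg_comp; congr (_ @: _)%VS; apply/lfunP => u.
by rewrite comp_lfunE !lfunE /= mulmxA.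
Qed.

Lemma act_vs1 (X : Vsp F n) : act_vs 1%:M X = X.
Proof.
rewrite /act_vs (_ : linfun _ = \1%VF) ?lim1g //; apply/lfunP => u.
by rewrite id_lfunE lfunE /= mulmx1.
Qed.

Lemma act_tripleM (g h : mx) (t : triple F n) :
  act_triple (g *m h) t = act_triple h (act_triple g t).
Proof.
by case: t => [[a b] c]; rewrite /act_triple /= -!map_comp; congr (_, _, _);
  apply: eq_map => X /=; apply: act_vsM.
Qed.

Lemma act_triple1 (t : triple F n) : act_triple 1%:M t = t.
Proof.
by case: t => [[a b] c]; rewrite /act_triple /=; congr (_, _, _);
  rewrite -[RHS]map_id; apply: eq_map => X; apply: act_vs1.
Qed.

Lemma same_orbit_sym (t s : triple F n) : same_orbit t s -> same_orbit s t.
Proof.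
case=> g [og <-]; exists (invmx g); split; first exact: orthogonal_mxV.
by rewrite -act_tripleM mulmxV ?act_triple1 //; case: og.
Qed.

Lemma same_orbit_trans (t s r : triple F n) :
  same_orbit t s -> same_orbit s r -> same_orbit t r.
Proof.
case=> g [og <-] [h [oh <-]]; exists (g *m h).
by split; [apply: orthogonal_mxM | rewrite act_tripleM].
Qed.

End Action.

Lemma functional_preimage_seq (A T : eqType) (P : A -> T -> Prop) (s : seq T) :
  (forall t x y, P x t -> P y t -> x = y) ->
  exists L : seq A, forall x t, t \in s -> P x t -> x \in L.
Proof.
move=> Pfun; elim: s => [|t s [L sL]]; first by exists [::].
have [[x0 Px0t] | noP] := classic (exists x, P x t).
  exists (x0 :: L) => x r; rewrite !inE => /orP [/eqP-> Pxt | rs Pxr].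
    by rewrite (Pfun _ _ _ Pxt Px0t) eqxx.
  by rewrite (sL x r rs Pxr) orbT.
exists L => x r; rewrite inE => /orP [/eqP-> Pxt | rs]; last exact: sL.
by case: noP; exists x.
Qed.

Lemma infinitely_many_orbits_of_family (F : fieldType) (n : nat) (a b c : seq nat)
    (T : F -> triple F n) :
  (forall s : seq F, exists x, x \notin s) -> (forall x, in_T a b c (T x)) ->
  (forall x y, same_orbit (T x) (T y) -> x = y) ->
  infinitely_many_orbits F n a b c.
Proof.
move=> F_infinite inT T_inj [s cover].
have [L sL] := functional_preimage_seq (P := fun x t => same_orbit (T x) t) s
  (fun t x y xt yt => T_inj x y (same_orbit_trans xt (same_orbit_sym yt))).
have [x xL] := F_infinite L; have [t ts xt] := cover _ (inT x).
by move: xL; rewrite (sL x t ts xt).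
Qed.

Ltac decide_nat :=
  repeat match goal with
  | |- context [?a == ?b] =>
      lazymatch type of a with nat =>
      first [ rewrite (_ : (a == b) = true); last by apply/eqP; lia
            | rewrite (_ : (a == b) = false); last by apply/eqP; lia ] end
  | |- context [leq ?a ?b] =>
      first [ rewrite (_ : leq a b = true); last by apply/idP; lia
            | rewrite (_ : leq a b = false); last by apply/negbTE/negP; lia ]
  end; rewrite /=.

Section Basis.
Variables (F : fieldType) (n : nat).
Local Notation vec := 'rV[F]_(n.*2).
Local Notation form := (@Defs.form F n).

(* [ev k] is the canonical vector e_(k+1) of the statement (indices from 0). *)
Definition ev (k : nat) : vec := \row_(j < n.*2) ((j : nat) == k)%:R.

Definition evs (a m : nat) : seq vec := [seq ev k | k <- iota a m].

Lemma ev_delta k (lt_k : (k < n.*2)%N) : ev k = delta_mx 0 (Ordinal lt_k).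
Proof. by apply/rowP => j; rewrite !mxE. Qed.

Lemma ev_out k : (n.*2 <= k)%N -> ev k = 0.
Proof.
move=> le_k; apply/rowP => j; rewrite !mxE.
by case: eqP => // jk; have := ltn_ord j; rewrite jk ltnNge le_k.
Qed.

Lemma form_ev i j :
  form (ev i) (ev j) = [&& (i + j).+1 == n.*2, i < n.*2 & j < n.*2]%N%:R.
Proof.
have [lt_i|le_i] := ltnP i n.*2; last by rewrite ev_out // form0l /= andbF.
have [lt_j|le_j] := ltnP j n.*2; last by rewrite (ev_out le_j) form0r /= andbF.
by rewrite ev_delta (ev_delta lt_j) /Defs.form -rowE trmx_delta -colE !mxE /= andbT.
Qed.

Lemma mem_evs a m x : x \in evs a m -> exists2 k, (a <= k < a + m)%N & x = ev k.
Proof. by case/mapP => k; rewrite mem_iota => ak ->; exists k. Qed.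

Lemma span_cat_evs_orthl (X : seq vec) a m z :
  all (fun x => form x z == 0) X -> (forall k, (a <= k < a + m)%N -> form (ev k) z = 0) ->
  {in <<X ++ evs a m>>%VS, forall u, form u z = 0}.
Proof.
move=> Xz evz; apply: span_orthl => x; rewrite mem_cat => /orP [/(allP Xz)/eqP //|].
by case/mem_evs => k ak ->; apply: evz.
Qed.

Lemma free_cons_cat_evs (v : vec) X a m z :
  all (fun x => form x z == 0) X -> (forall k, (a <= k < a + m)%N -> form (ev k) z = 0) ->
  form v z != 0 -> free (X ++ evs a m) -> free ((v :: X) ++ evs a m).
Proof.
move=> Xz evz vz; apply: free_cons_orth vz => x xX.
by apply: (span_cat_evs_orthl Xz evz); apply: memv_span.
Qed.

Lemma free_evs a m : (a + m <= n.*2)%N -> free (evs a m).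
Proof.
elim: m a => [|m IHm] a le_am; first exact: nil_free.
apply: (@free_cons_cat_evs _ [::] _ _ (ev (n.*2 - a.+1))) => //=.
- by move=> k ak; rewrite form_ev; decide_nat.
- by rewrite form_ev; decide_nat; rewrite oner_eq0.
- by apply: IHm; lia.
Qed.

Lemma isotropic_cat_evs (X : seq vec) a m :
  all (fun x => all (fun y => form x y == 0) X) X ->
  (forall k, (a <= k < a + m)%N -> all (fun x => form x (ev k) == 0) X) ->
  (a + m <= n)%N -> isotropic <<X ++ evs a m>>%VS.
Proof.
move=> XX Xev le_am; apply: isotropic_span => x y.
have evev k l : (a <= k < a + m)%N -> (a <= l < a + m)%N -> form (ev k) (ev l) = 0.
  by move=> ak al; rewrite form_ev; decide_nat.
rewrite !mem_cat => /orP [xX|/mem_evs [k ak ->]] /orP [yX|/mem_evs [l al ->]].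
- by apply/eqP; move/allP: XX => /(_ x xX)/allP; apply.
- by apply/eqP; move/allP: (Xev l al); apply.
- by rewrite formC; apply/eqP; move/allP: (Xev k ak); apply.
- exact: evev.
Qed.

Lemma span_cat_evs_subv (X Y : seq vec) a m m' :
  {subset X <= <<Y ++ evs a m'>>%VS} -> (m <= m')%N ->
  (<<X ++ evs a m>> <= <<Y ++ evs a m'>>)%VS.
Proof.
move=> XY le_m; apply/span_subvP => u; rewrite mem_cat => /orP [/XY //|].
case/mem_evs => k km ->; apply: memv_span; rewrite mem_cat; apply/orP; right.
by apply/mapP; exists k; rewrite // mem_iota; lia.
Qed.

End Basis.

(* [Shape_abc]: the unpadded flag U_1 < U_2 < U_3 has dimensions a, a + b, a + b + c;
   padding then realises every (g1, g2, g3) >= (a, b, c). [core_dims] records the first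
   two dimensions. *)
Inductive shape := Shape221 | Shape212 | Shape122.

Definition core_dims (s : shape) : nat * nat :=
  match s with Shape221 => (2, 4) | Shape212 => (2, 3) | Shape122 => (1, 3) end.

Section Configuration.
Variables (F : fieldType) (n : nat).
Local Notation vec := 'rV[F]_(n.*2).
Local Notation form := (@Defs.form F n).
Local Notation ev := (@ev F n).
Local Notation evs := (@evs F n).

(* The hyperbolic basis: e_ i = e_i and f_ i = e_(2n+1-i), so (e_ i, f_ j) = delta_ij
   for 1 <= i, j <= n. *)
Definition e_ i : vec := ev i.-1.
Definition f_ i : vec := ev (n.*2 - i).

Definition u1 : vec := f_ 2 + e_ 1 - e_ 6.
Definition u2 : vec := f_ 3 + e_ 4.
Definition u3 : vec := f_ 4 - e_ 3.
Definition u4 : vec := f_ 5 + e_ 1.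
Definition u5 : vec := f_ 6 + e_ 2.

Ltac expand_form :=
  rewrite /u1 /u2 /u3 /u4 /u5 /e_ /f_
    ?(formDl, formDr, formBl, formBr, formZl, formZr, formNl, formNr) ?form_ev;
  decide_nat.

Ltac check_all_forms :=
  rewrite /= ?andbT; repeat (apply/andP; split); try done; apply/eqP; expand_form; ring.

Ltac orth_tac :=
  apply: span_cat_evs_orthl;
  [ check_all_forms | let k := fresh "k" in move=> k ?; expand_form; ring ].

(* [free_by zs] proves a generating list free by triangularity: the i-th vector of [zs]
   pairs nontrivially with the i-th generator and is orthogonal to all later ones. *)
Ltac free_by zs :=
  lazymatch zs with
  | [::] => apply: free_evs; lia
  | ?z :: ?zs' =>
      apply: (free_cons_cat_evs (z := z));
      [ check_all_forms
      | let k := fresh "k" in move=> k ?; expand_form; ring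
      | expand_form;
        rewrite ?(mulr0, mul0r, addr0, add0r, subr0, sub0r, oppr0) ?oppr_eq0 ?oner_eq0 //
      | free_by zs' ]
  end.

Definition V : Vsp F n := <<evs 0 n>>%VS.

Lemma e_in_V i : (1 <= i <= n)%N -> e_ i \in V.
Proof. by move=> i_n; apply: memv_span; apply/mapP; exists i.-1; rewrite // mem_iota; lia. Qed.

Lemma V_iso : isotropic V.
Proof. by apply: (@isotropic_cat_evs _ _ [::]) => //; lia. Qed.

Lemma V_orth_e i v : (1 <= i <= n)%N -> v \in V -> form v (e_ i) = 0.
Proof. by move=> i_n vV; apply: V_iso vV (e_in_V i_n). Qed.

Lemma V_dim : \dim V = n.
Proof. by rewrite /V (eqP (free_evs _ _)) ?size_map ?size_iota //; lia. Qed.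

Section Lagrangian.
Variables (pW : nat).
Hypothesis le_pW : (6 + pW <= n)%N.

Definition W : Vsp F n := <<[:: f_ 1; f_ 2; f_ 3; f_ 4] ++ evs 6 pW>>%VS.

Lemma f_in_W i : (1 <= i <= 4)%N -> f_ i \in W.
Proof.
move=> i4; apply: memv_span; rewrite mem_cat; apply/orP; left.
by case: i i4 => [|[|[|[|[|i]]]]] //= _; rewrite !inE eqxx ?orbT.
Qed.

Lemma W_iso : isotropic W.
Proof. by apply: isotropic_cat_evs; [check_all_forms | move=> k ?; check_all_forms | lia]. Qed.

Lemma W_dim : \dim W = (4 + pW)%N.
Proof.
suff /eqP-> : free ([:: f_ 1; f_ 2; f_ 3; f_ 4] ++ evs 6 pW).
  by rewrite size_cat size_map size_iota.
by free_by [:: e_ 1; e_ 2; e_ 3; e_ 4].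
Qed.

Lemma W_orth_f i w : (1 <= i <= 6)%N -> w \in W -> form w (f_ i) = 0.
Proof. by move=> i6; move: w; orth_tac. Qed.

Lemma W_orth_e i w : (5 <= i <= n)%N -> w \in W -> form w (e_ i) = 0.
Proof. by move=> i_n; move: w; orth_tac. Qed.

Lemma W_orth_V w : w \in W ->
  form w (e_ 1) = 0 -> form w (e_ 2) = 0 -> form w (e_ 3) = 0 -> form w (e_ 4) = 0 ->
  {in V, forall v, form v w = 0}.
Proof.
move=> wW w1 w2 w3 w4; apply: span_orthl => _ /mem_evs [k k_n ->]; rewrite formC.
have -> : ev k = e_ k.+1 by [].
by case: k k_n => [|[|[|[|k]]]] k_n //; apply: W_orth_e wW; lia.
Qed.

End Lagrangian.

Section FlagTop.
Variables (p3 : nat).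
Hypothesis le_p3 : (6 + p3 <= n)%N.

Definition U3core : seq vec := [:: u1; u2; u3; u4; u5].
Definition U3 : Vsp F n := <<U3core ++ evs 6 p3>>%VS.

Lemma U3core_sub_U3 : {subset U3core <= U3}.
Proof. by move=> u uU; apply: memv_span; rewrite mem_cat uU. Qed.

Lemma U3_iso : isotropic U3.
Proof. by apply: isotropic_cat_evs; [check_all_forms | move=> k ?; check_all_forms | lia]. Qed.

Lemma U3_orth u : u \in U3 ->
  [/\ form u (e_ 1) = 0, form u (e_ 2 + e_ 5 - f_ 1) = 0, form u (e_ 3 - f_ 4) = 0,
      form u (e_ 4 + f_ 3) = 0 & form u (e_ 6 - f_ 2) = 0].
Proof. by move=> uU; split; move: u uU; rewrite /U3 /U3core; orth_tac. Qed.

Lemma U3_dim : \dim U3 = (5 + p3)%N.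
Proof.
suff /eqP-> : free (U3core ++ evs 6 p3) by rewrite size_cat size_map size_iota.
by rewrite /U3core; free_by [:: e_ 2; e_ 3; e_ 4; e_ 5; e_ 6].
Qed.

End FlagTop.

Section FlagBottom.
Variables (s : shape) (p1 : nat).
Hypothesis le_p1 : (6 + p1 <= n)%N.

Definition U1core : seq vec :=
  if s is Shape122 then [:: u4 + u3] else [:: u4 + u3; u5 + u2].
Definition U1 : Vsp F n := <<U1core ++ evs 6 p1>>%VS.

Lemma U1_orth u : u \in U1 ->
  [/\ form u (e_ 1) = 0, form u (e_ 2) = 0, form u (e_ 4 - e_ 5) = 0
    & form u (e_ 3 - e_ 6) = 0].
Proof. by move=> uU; split; move: u uU; rewrite /U1 /U1core; case: s; orth_tac. Qed.

Lemma u43_in_U1 : u4 + u3 \in U1.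
Proof. by rewrite /U1 /U1core; case: s; apply: memv_span; rewrite mem_cat inE eqxx. Qed.

Lemma U1_dim : \dim U1 = ((core_dims s).1 + p1)%N.
Proof.
suff /eqP-> : free (U1core ++ evs 6 p1).
  by rewrite size_cat size_map size_iota /U1core; case: s.
rewrite /U1core; case: s; [free_by [:: e_ 5; e_ 6] | free_by [:: e_ 5; e_ 6] | free_by [:: e_ 5]].
Qed.

End FlagBottom.

Section FlagMiddle.
Variables (s : shape) (p2 : nat).
Hypothesis le_p2 : (6 + p2 <= n)%N.

Definition U2core (x : F) : seq vec :=
  match s with
  | Shape221 => [:: u4 + u3; u5 + u2; u1 + x *: u3; u2]
  | Shape212 => [:: u4 + u3; u5 + u2; x *: u4 - u1]
  | Shape122 => [:: u4 + u3; u1 - x *: u4; u5 + u2]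
  end.
Definition U2 (x : F) : Vsp F n := <<U2core x ++ evs 6 p2>>%VS.

Lemma U2_orth x u : u \in U2 x -> form u (x *: e_ 2 - e_ 4 + e_ 5) = 0.
Proof. by move: u; rewrite /U2 /U2core; case: s; orth_tac. Qed.

Lemma U2_witness x : u1 + x *: u3 \in U2 x.
Proof.
have mem_core v : v \in U2core x -> v \in U2 x.
  by move=> vU; apply: memv_span; rewrite mem_cat vU.
rewrite /U2core in mem_core; case: s mem_core => mem_core.
- by apply: mem_core; rewrite !inE eqxx ?orbT.
- have -> : u1 + x *: u3 = x *: (u4 + u3) - (x *: u4 - u1).
    by apply/rowP => j; rewrite !mxE; ring.
  by apply: rpredB; [apply: rpredZ|]; apply: mem_core; rewrite !inE eqxx ?orbT.
- have -> : u1 + x *: u3 = x *: (u4 + u3) + (u1 - x *: u4).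
    by apply/rowP => j; rewrite !mxE; ring.
  by apply: rpredD; [apply: rpredZ|]; apply: mem_core; rewrite !inE eqxx ?orbT.
Qed.

Lemma U2_dim x : \dim (U2 x) = ((core_dims s).2 + p2)%N.
Proof.
suff /eqP-> : free (U2core x ++ evs 6 p2).
  by rewrite size_cat size_map size_iota /U2core; case: s.
rewrite /U2core; case: s.
- by free_by [:: e_ 5; e_ 6; e_ 2; e_ 3].
- by free_by [:: e_ 4; e_ 6; e_ 2].
- by free_by [:: e_ 4; e_ 2; e_ 6].
Qed.

Lemma U1_sub_U2 p1 x : (p1 <= p2)%N -> (U1 s p1 <= U2 x)%VS.
Proof.
move=> le_p12; have sub_core : {subset U1core s <= U2core x}.
  by apply/allP; rewrite /U1core /U2core; case: s; rewrite /= !inE !eqxx ?orbT.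
by apply: span_cat_evs_subv => // u /sub_core uU; apply: memv_span; rewrite mem_cat uU.
Qed.

Lemma U2_sub_U3 x p3 : (p2 <= p3)%N -> (U2 x <= U3 p3)%VS.
Proof.
move=> le_p23; apply: span_cat_evs_subv => //; apply/allP; have U3u := U3core_sub_U3 p3.
rewrite /U2core; case: s => /=; rewrite ?andbT; repeat (apply/andP; split);
  by repeat first [ apply: U3u; rewrite !inE eqxx ?orbT
                  | apply: rpredB | apply: rpredD | apply: rpredZ ].
Qed.

End FlagMiddle.

Section PairSpace.
Variables (s : shape) (p1 p2 : nat).
Hypotheses (le_p1 : (6 + p1 <= n)%N) (le_p2 : (6 + p2 <= n)%N).

(* The first member of the flag containing both u_4 + u_3 and u_5 + u_2. *)
Definition Upair (x : F) : Vsp F n := if s is Shape122 then U2 s p2 x else U1 s p1.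

Lemma Upair_orth x u : u \in Upair x -> form u (f_ 2 - f_ 4) = 0.
Proof. by move: u; rewrite /Upair /U1 /U2 /U1core /U2core; case: s; orth_tac. Qed.

Lemma Upair_pair x : u4 + u3 \in Upair x /\ u5 + u2 \in Upair x.
Proof.
by rewrite /Upair /U1 /U2 /U1core /U2core; case: s; split; apply: memv_span;
  rewrite mem_cat !inE eqxx ?orbT.
Qed.

End PairSpace.

End Configuration.

Lemma eq_of_relations (K : fieldType) (x y a b c : K) :
  (2%:R : K) != 0 -> a != 0 ->
  a - b - c = 0 -> a + b - c = 0 -> y * a + x * y * b - x * c = 0 -> x = y.
Proof.
move=> two_nz a_nz rM rP rD.
have b0 : b = 0.
  have : 2%:R * b = (a + b - c) - (a - b - c) by ring.
  by rewrite rP rM subrr => /eqP; rewrite mulf_eq0 (negbTE two_nz) => /eqP.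
have ca : c = a by apply/esym/subr0_eq; rewrite -rM b0 subr0.
have : (y - x) * a = 0 by rewrite -rD b0 ca; ring.
by move/eqP; rewrite mulf_eq0 (negbTE a_nz) orbF subr_eq0 => /eqP ->.
Qed.

Section Family.
Variables (F : fieldType) (n : nat) (s : shape) (pW p1 p2 p3 : nat).
Hypotheses (le_pW : (6 + pW <= n)%N) (le_p3 : (6 + p3 <= n)%N).
Hypotheses (le_p12 : (p1 <= p2)%N) (le_p23 : (p2 <= p3)%N).
Local Notation form := (@Defs.form F n).
Local Notation e_ := (@e_ F n).
Local Notation f_ := (@f_ F n).
Local Notation V := (@V F n).
Local Notation W := (@W F n pW).
Local Notation U1 := (@U1 F n s p1).
Local Notation U2 := (@U2 F n s p2).
Local Notation U3 := (@U3 F n p3).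
Local Notation Upair := (@Upair F n s p1 p2).

Let le_p1 : (6 + p1 <= n)%N. Proof. lia. Qed.
Let le_p2 : (6 + p2 <= n)%N. Proof. lia. Qed.

Lemma W_cap_V_add_orth_coords w v z : w \in W -> v \in V ->
  {in W, forall t, form t z = 0} -> {in U3, forall t, form t z = 0} -> w = v + z ->
  [/\ form w (e_ 1) = 0, form w (e_ 3) = 0 & form w (e_ 4) = 0].
Proof.
move=> wW vV Wz U3z w_eq.
have wz i : (1 <= i <= n)%N -> form w (e_ i) = form (e_ i) z.
  by move=> i_n; rewrite w_eq formDl V_orth_e // add0r formC.
have z6 : form (e_ 6) z = 0 by rewrite -wz ?(W_orth_e le_pW _ wW) //; lia.
have zf i : (1 <= i <= 4)%N -> form (f_ i) z = 0 by move=> i4; apply/Wz/f_in_W.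
have zu t : t \in U3core F n -> form t z = 0 by move=> tU; apply/U3z/U3core_sub_U3.
have [] : [/\ form (u1 F n) z = 0, form (u2 F n) z = 0 & form (u3 F n) z = 0].
  by split; apply: zu; rewrite !inE eqxx ?orbT.
rewrite /u1 /u2 /u3 !(formBl, formDl) !zf // z6 !add0r subr0 => z1 z4 /eqP.
by rewrite oppr_eq0 => /eqP z3; rewrite !wz ?z1 ?z3 ?z4 //; lia.
Qed.

Lemma W_cap_V_add_U3_orth_Upair_coords y w v u : w \in W ->
  {in Upair y, forall t, form t w = 0} -> v \in V -> u \in U3 -> w = v + u ->
  [/\ form w (e_ 1) = 0, form w (e_ 3) = 0 & form w (e_ 2 + e_ 4) = 0].
Proof.
move=> wW Kw vV uU w_eq.
have w1 : form w (e_ 1) = 0.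
  rewrite w_eq formDl (V_orth_e (_ : (1 <= 1 <= n)%N) vV) ?add0r; last by lia.
  by case: (U3_orth le_p3 uU).
have fw i : (1 <= i <= 6)%N -> form (f_ i) w = 0.
  by move=> i6; rewrite formC (W_orth_f le_pW i6 wW).
have [K43 K52] := Upair_pair n s p1 p2 y.
move: (Kw _ K43) (Kw _ K52); rewrite /u2 /u3 /u4 /u5 !(formBl, formDl) !fw //.
rewrite !(formC (e_ _) w) w1 formDr !add0r => /eqP; rewrite oppr_eq0 => /eqP w3 w24.
by split.
Qed.

Lemma W_cap_U3_add_V_add_U1_orth_coords w u v u' :
  w \in W -> u \in U3 -> v \in V -> u' \in U1 ->
  {in W, forall t, form t (v + u') = 0} -> w = u + (v + u') ->
  [/\ form w (e_ 1) = 0, form w (e_ 3) = 0 & form w (e_ 2 - e_ 4) = 0].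
Proof.
move=> wW uU vV u'U1 Wz w_eq.
have ve i : (1 <= i <= 6)%N -> form v (e_ i) = 0 by move=> i6; apply: V_orth_e vV; lia.
have we i : (5 <= i <= 6)%N -> form w (e_ i) = 0 by move=> i6; apply: W_orth_e wW; lia.
have wE t : form w t = form u t + form v t + form u' t by rewrite w_eq !formDl addrA.
have uf i : (1 <= i <= 4)%N -> form u (f_ i) = 0.
  move=> i4; have zf : form (v + u') (f_ i) = 0 by rewrite formC Wz ?f_in_W.
  have := W_orth_f le_pW (_ : (1 <= i <= 6)%N) wW.
  by rewrite w_eq formDl zf addr0; apply; lia.
have [ue1] := U3_orth le_p3 uU; rewrite !(formBr, formDr) !uf // !subr0 ?addr0.
move=> /eqP; rewrite addr_eq0 => /eqP ue2 ue3 ue4 ue6.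
have [u'1 u'2] := U1_orth le_p1 u'U1; rewrite !formBr => /subr0_eq u'4 /subr0_eq u'3.
have u'6 : form u' (e_ 6) = 0 by have := we 6 isT; rewrite wE ve // ue6 !add0r.
have u'5 : form u' (e_ 5) = - form u (e_ 5).
  by have := we 5 isT; rewrite wE ve // addr0 => /addr0_eq.
by rewrite !wE !ve // ue1 u'1 ue3 u'3 u'6 ue2 u'2 ue4 u'4 u'5; split; ring.
Qed.

Lemma W_cap_V_add_U2_coord y w v u : w \in W -> v \in V -> u \in U2 y -> w = v + u ->
  form w (y *: e_ 2 - e_ 4) = 0.
Proof.
move=> wW vV uU w_eq.
have ve i : (1 <= i <= 6)%N -> form v (e_ i) = 0 by move=> i6; apply: V_orth_e vV; lia.
have u5 : form u (e_ 5) = 0.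
  have := W_orth_e le_pW (_ : (5 <= 5 <= n)%N) wW.
  by rewrite w_eq formDl ve // add0r; apply; lia.
have := U2_orth le_p2 uU; rewrite formDr u5 addr0 => uy.
by rewrite w_eq formDl uy addr0 !formBr formZr !ve // mulr0 subr0.
Qed.

Definition family (x : F) : triple F n := ([:: V], [:: W], [:: U1; U2 x; U3]).

Lemma family_in_T beta g1 g2 g3 x :
  beta = (4 + pW)%N -> g1 = ((core_dims s).1 + p1)%N ->
  (g1 + g2 = (core_dims s).2 + p2)%N -> (g1 + g2 + g3 = 5 + p3)%N ->
  in_T [:: n] [:: beta] [:: g1; g2; g3] (family x).
Proof.
move=> d_beta d_g1 d_g12 d_g123; split; [|split].
- split=> //; split; last by split; [case | exact: V_iso].
  by case=> // _; rewrite big_ord1 V_dim.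
- split=> //; split; last by split; [case | exact: W_iso].
  by case=> // _; rewrite big_ord1 (W_dim F le_pW).
- split=> //; split; last split.
  + case=> [|[|[|j]]] // _; rewrite !big_ord_recr big_ord0 /=.
    * by rewrite (U1_dim F s le_p1) d_g1.
    * by rewrite U2_dim // -d_g12; lia.
    * by rewrite (U3_dim F le_p3) -d_g123; lia.
  + by case=> [|[|j]] // _ /=; [exact: U1_sub_U2 | exact: U2_sub_U3].
  + exact: U3_iso.
Qed.

Section Orbit.
Variables (g : 'M[F]_(n.*2)) (x y : F).
Hypotheses (og : orthogonal_mx g) (g_family : act_triple g (family x) = family y).

Let A := f_ 2 *m g.
Let B := f_ 4 *m g.

Let gV : act_vs g V = V. Proof. by case: g_family. Qed.
Let gW : act_vs g W = W. Proof. by case: g_family. Qed.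
Let gU1 : act_vs g U1 = U1. Proof. by case: g_family. Qed.
Let gU2 : act_vs g (U2 x) = U2 y. Proof. by case: g_family. Qed.
Let gU3 : act_vs g U3 = U3. Proof. by case: g_family. Qed.
Let gUpair : act_vs g (Upair x) = Upair y.
Proof. by rewrite /Upair; case: (s) gU1 gU2. Qed.

Let AW : A \in W. Proof. by apply: mem_act_vs gW _; apply: f_in_W. Qed.
Let BW : B \in W. Proof. by apply: mem_act_vs gW _; apply: f_in_W. Qed.

Let gV_e i : (1 <= i <= 6)%N -> e_ i *m g \in V.
Proof. by move=> i6; apply: mem_act_vs gV _; apply: e_in_V; lia. Qed.

Lemma image_f2_coords : [/\ form A (e_ 1) = 0, form A (e_ 3) = 0 & form A (e_ 4) = 0].
Proof.
apply: (W_cap_V_add_orth_coords (z := (f_ 2 - e_ 6) *m g) AW (gV_e (i := 6) isT)).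
- apply: act_vs_orthl og gW _ => t tW.
  by rewrite formBr (W_orth_f le_pW _ tW) ?(W_orth_e le_pW _ tW) ?subr0 //; lia.
- apply: act_vs_orthl og gU3 _ => t /(U3_orth le_p3) [_ _ _ _].
  by rewrite !formBr => /subr0_eq ->; rewrite subrr.
- by rewrite /A -mulmxDl addrC subrK.
Qed.

Lemma image_f2_e2_neq0 : form A (e_ 2) != 0.
Proof.
have [A1 A3 A4] := image_f2_coords; apply/eqP => A2.
have := W_orth_V le_pW AW A1 A2 A3 A4 (gV_e (i := 2) isT).
by rewrite orthogonal_form // /e_ /f_ form_ev; decide_nat; move/eqP; rewrite oner_eq0.
Qed.

Lemma image_f2_sub_f4_coord : form (A - B) (e_ 2 + e_ 4) = 0.
Proof.
have [] := W_cap_V_add_U3_orth_Upair_coords (rpredB AW BW) (y := y)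
  (v := (e_ 6 - e_ 1 - e_ 3) *m g) (u := (u1 F n - u3 F n) *m g) => //.
- by rewrite /A /B -mulmxBl; apply: act_vs_orthl og gUpair _ => t /Upair_orth; apply.
- by rewrite !mulmxBl !rpredB ?gV_e.
- by apply: mem_act_vs gU3 _; rewrite rpredB // U3core_sub_U3 // !inE eqxx ?orbT.
- by rewrite /A /B -!mulmxBl -mulmxDl; congr (_ *m g); apply/rowP => j; rewrite !mxE; ring.
Qed.

Lemma image_f2_add_f4_coord : form (A + B) (e_ 2 - e_ 4) = 0.
Proof.
have [] := W_cap_U3_add_V_add_U1_orth_coords (rpredD AW BW) (u := (u1 F n - u4 F n) *m g)
  (v := (e_ 6 + e_ 3 - e_ 1) *m g) (u' := (u4 F n + u3 F n) *m g) => //.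
- by apply: mem_act_vs gU3 _; rewrite rpredB // U3core_sub_U3 // !inE eqxx ?orbT.
- by rewrite mulmxBl mulmxDl !rpredB ?rpredD ?gV_e.
- by apply: mem_act_vs gU1 _; apply: u43_in_U1.
- rewrite -mulmxDl; apply: act_vs_orthl og gW _ => t tW.
  have tf i : (1 <= i <= 6)%N -> form t (f_ i) = 0 by move=> i6; exact: (W_orth_f le_pW i6 tW).
  have t6 : form t (e_ 6) = 0 by apply: (W_orth_e le_pW _ tW); lia.
  by rewrite /u3 /u4 !(formDr, formBr, formNr) !tf // t6; ring.
- by rewrite /A /B -!mulmxDl; congr (_ *m g); apply/rowP => j; rewrite !mxE; ring.
Qed.

Lemma image_f2_add_scale_f4_coord : form (A + x *: B) (y *: e_ 2 - e_ 4) = 0.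
Proof.
apply: (W_cap_V_add_U2_coord (rpredD AW (rpredZ _ BW))
  (v := (e_ 6 - e_ 1 + x *: e_ 3) *m g) (u := (u1 F n + x *: u3 F n) *m g)).
- by rewrite mulmxDl mulmxBl -scalemxAl rpredD ?rpredB ?rpredZ ?gV_e.
- by apply: mem_act_vs gU2 _; apply: U2_witness.
- rewrite /A /B scalemxAl -!mulmxDl; congr (_ *m g).
  by apply/rowP => j; rewrite !mxE; ring.
Qed.

Lemma family_orbit_eq : (2%:R : F) != 0 -> x = y.
Proof.
move=> two_nz.
have [_ _ A4] := image_f2_coords.
have := image_f2_sub_f4_coord; have := image_f2_add_f4_coord.
have := image_f2_add_scale_f4_coord.
rewrite !(formDl, formBl, formNl, formZl, formDr, formBr, formNr, formZr) !A4 => rD rP rM.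
apply: (eq_of_relations two_nz image_f2_e2_neq0 (b := form B (e_ 2)) (c := form B (e_ 4))).
- by rewrite -rM; ring.
- by rewrite -rP; ring.
- by rewrite -rD; ring.
Qed.

End Orbit.

Lemma family_orbit_inj (two_nz : (2%:R : F) != 0) x y :
  same_orbit (family x) (family y) -> x = y.
Proof. by case=> g [og g_family]; apply: family_orbit_eq og g_family two_nz. Qed.

Lemma infinitely_many_orbits_of_shape (F_infinite : forall r : seq F, exists x, x \notin r)
    (two_nz : (2%:R : F) != 0) beta g1 g2 g3 :
  beta = (4 + pW)%N -> g1 = ((core_dims s).1 + p1)%N ->
  (g1 + g2 = (core_dims s).2 + p2)%N -> (g1 + g2 + g3 = 5 + p3)%N ->
  infinitely_many_orbits F n [:: n] [:: beta] [:: g1; g2; g3].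
Proof.
move=> d_beta d_g1 d_g12 d_g123; apply: (infinitely_many_orbits_of_family F_infinite).
  by move=> x; apply: family_in_T.
exact: family_orbit_inj.
Qed.

End Family.

Theorem proposition3p15 (F : fieldType)
  (F_infinite : forall s : seq F, exists x : F, x \notin s)
  (F_char : (2%:R : F) != 0)
  (n beta g1 g2 g3 : nat)
  (hb4 : (4 <= beta)%N) (hbn : (beta <= n - 2)%N)
  (hg1 : (0 < g1)%N) (hg2 : (0 < g2)%N) (hg3 : (0 < g3)%N)
  (hsum : (g1 + g2 + g3 < n)%N)
  (hmin : (2 <= minn g1 g2)%N \/ (2 <= minn g1 g3)%N \/ (2 <= minn g2 g3)%N) :
  infinitely_many_orbits F n [:: n] [:: beta] [:: g1; g2; g3].
Proof.
have [s [d1_g1 d2_g12 d2_g3]] : exists s, [/\ (core_dims s).1 <= g1,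
    (core_dims s).2 <= (core_dims s).1 + g2 & 5 <= (core_dims s).2 + g3]%N.
  by case: hmin => [h|[h|h]]; [exists Shape221 | exists Shape212 | exists Shape122];
    split=> /=; lia.
by apply: (@infinitely_many_orbits_of_shape F n s (beta - 4) (g1 - (core_dims s).1)
  (g1 + g2 - (core_dims s).2) (g1 + g2 + g3 - 5)) => //; lia.
Qed.
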